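(* The Finsleroid Indicatrix $\{R\in V_N:K(g;R)=1\}$ meets the $Z$-axis $\{q=0\}$ in exactly two points, $Z_2(g)=e^{-G\pi/4}>0$ and $Z_1(g)=-e^{G\pi/4}<0$, and the altitude of the Finsleroid is $$Z_2(g)-Z_1(g)=2\cosh\frac{G\pi}{4}.$$
   Context: Let $N\ge2$, $V_N=\mathbb{R}^N$ with points $R=(R^1,\dots,R^N)$, $Z=R^N$; indices $a,b$ run over $1,\dots,N-1$, repeated indices summed. Fix a symmetric positive-definite matrix $(r_{ab})$, $q(R)=\sqrt{r_{ab}R^aR^b}$. Fix $g\in(-2,2)$, $h=\sqrt{1-g^2/4}$, $G=g/h$. Define $B(g;R)=Z^2+gqZ+q^2$, $A(g;R)=Z+\frac12gq$, $\Phi(g;R)=\arctan(A/(hq))$ for $q>0$ ($\Phi=\pi/2$ if $q=0,Z>0$; $\Phi=-\pi/2$ if $q=0,Z<0$), $J=e^{\frac12G\Phi}$, and the Finsleroid metric function $K(g;R)=\sqrt{B}\,J$ ($K(g;0)=0$). *)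

From Stdlib Require Import Reals.
From mathcomp Require Import ssreflect ssrbool eqtype ssrnat fintype bigop.
Open Scope R_scope.

(* V_N = R^N, points x : 'I_N -> R.  0-based: paper coordinate R^(i+1) is x i. *)
Definition VN (N : nat) := 'I_N -> R.

Definition coordn {N : nat} (x : VN N) (i : nat) : R :=
  match (insub i : option 'I_N) with Some j => x j | None => 0 end.

Definition Zc {N : nat} (x : VN N) : R := coordn x (N - 1)%nat.

Definition qf {N : nat} (r : 'I_(N - 1) -> 'I_(N - 1) -> R) (x : VN N) : R :=
  sqrt (\big[Rplus/0]_(a < N - 1) \big[Rplus/0]_(b < N - 1)
          (r a b * coordn x a * coordn x b)).

Definition symmetric_mx {n : nat} (r : 'I_n -> 'I_n -> R) : Prop :=
  forall a b, r a b = r b a.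

Definition posdef_mx {n : nat} (r : 'I_n -> 'I_n -> R) : Prop :=
  forall y : 'I_n -> R, (exists a, y a <> 0) ->
    0 < \big[Rplus/0]_(a < n) \big[Rplus/0]_(b < n) (r a b * y a * y b).

Definition hh (g : R) : R := sqrt (1 - g ^ 2 / 4).
Definition GG (g : R) : R := g / hh g.

Definition Bf {N} r (g : R) (x : VN N) : R :=
  Zc x ^ 2 + g * qf r x * Zc x + qf r x ^ 2.
Definition Af {N} r (g : R) (x : VN N) : R := Zc x + / 2 * g * qf r x.

(* Phi; at the origin (q = 0, Z = 0) the value is irrelevant since B = 0 there *)
Definition Phif {N} r (g : R) (x : VN N) : R :=
  if Rlt_dec 0 (qf r x) then atan (Af r g x / (hh g * qf r x))
  else if Rlt_dec 0 (Zc x) then PI / 2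
  else if Rlt_dec (Zc x) 0 then - (PI / 2)
  else 0.

Definition Jf {N} r (g : R) (x : VN N) : R := exp (/ 2 * GG g * Phif r g x).

(* Finsleroid metric function; K(g;0) = sqrt 0 * J = 0 automatically *)
Definition Kf {N} r (g : R) (x : VN N) : R := sqrt (Bf r g x) * Jf r g x.

Definition zaxis_pt (N : nat) (z : R) : VN N :=
  fun i => if (nat_of_ord i == (N - 1)%nat) then z else 0.

(* On the Z-axis q = 0, so B = Z^2 and Phi = +-pi/2 according to the sign of Z:
   there K = Z e^{G pi/4} for Z > 0 and K = -Z e^{-G pi/4} for Z < 0.  Solving
   K = 1 gives the two points, and their distance is e^{-G pi/4} + e^{G pi/4}.
   Positive definiteness of (r_ab) is what makes {q = 0} exactly the Z-axis;
   only the values Phi = +-pi/2 enter, so neither the symmetry of (r_ab) nor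
   |g| < 2 is needed. *)
From Stdlib Require Import Reals Lra Lia Classical FunctionalExtensionality.
From mathcomp Require Import ssreflect ssrbool eqtype ssrnat fintype bigop.
From mathcomp Require Import zify.
Open Scope R_scope.

Lemma coordn_ord {N} (x : VN N) (i : 'I_N) : coordn x i = x i.
Proof. by rewrite /coordn insubT // => Hi; congr (x _); apply: val_inj. Qed.

Lemma coordn_out {N} (x : VN N) (i : nat) : (N <= i)%N -> coordn x i = 0.
Proof. by move=> Hi; rewrite /coordn insubF // ltnNge Hi. Qed.

Lemma Zc_zaxis {N} z : (0 < N)%N -> Zc (zaxis_pt N z) = z.
Proof.
move=> HN; have HN1 : (N - 1 < N)%N by rewrite subn1 prednK.
by rewrite /Zc (coordn_ord _ (Ordinal HN1)) /zaxis_pt /= eqxx.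
Qed.

Lemma coordn_zaxis_lt {N} z (a : nat) : (a < N - 1)%N -> coordn (zaxis_pt N z) a = 0.
Proof.
move=> Ha; case: (ltnP a N) => [HaN | HaN]; last exact: coordn_out.
rewrite (coordn_ord _ (Ordinal HaN)) /zaxis_pt /=.
by case: eqP => // Ea; move: Ha; rewrite Ea ltnn.
Qed.

Lemma qf_zaxis {N} (r : 'I_(N - 1) -> 'I_(N - 1) -> R) z : qf r (zaxis_pt N z) = 0.
Proof.
rewrite /qf (_ : \big[Rplus/0]_(a < N - 1) _ = 0) ?sqrt_0 //.
apply: (big_ind (fun v => v = 0)) => //; first by move=> ? ? -> ->; ring.
move=> a _; apply: (big_ind (fun v => v = 0)) => //; first by move=> ? ? -> ->; ring.
by move=> b _; rewrite coordn_zaxis_lt //; ring.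
Qed.

Lemma qf_eq0_coordn {N} {r : 'I_(N - 1) -> 'I_(N - 1) -> R} {x : VN N} :
  posdef_mx r -> qf r x = 0 -> forall a : 'I_(N - 1), coordn x a = 0.
Proof.
move=> Hr Hq a; apply: NNPP => Ha.
have := sqrt_lt_R0 _ (Hr (fun b => coordn x b) (ex_intro _ a Ha)).
by rewrite -/(qf r x) Hq; lra.
Qed.

Lemma qf_eq0_zaxis {N} {r : 'I_(N - 1) -> 'I_(N - 1) -> R} {x : VN N} :
  posdef_mx r -> qf r x = 0 -> x = zaxis_pt N (Zc x).
Proof.
move=> Hr Hq; apply: functional_extensionality => i; rewrite /zaxis_pt.
case: eqP => Hi; first by rewrite /Zc -Hi coordn_ord.
have HiN1 : (i < N - 1)%N by have := ltn_ord i; lia.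
by rewrite -(coordn_ord x i); exact: (qf_eq0_coordn Hr Hq (Ordinal HiN1)).
Qed.

Lemma mul_exp_eq1 (z a : R) : z * exp a = 1 <-> z = exp (- a).
Proof.
have Ha := exp_pos a; rewrite exp_Ropp; split=> [Hz | ->].
- apply: (Rmult_eq_reg_r (exp a)); last lra.
  by rewrite Hz Rinv_l //; lra.
- by field; lra.
Qed.

Section OnTheAxis.

Context {N : nat} {r : 'I_(N - 1) -> 'I_(N - 1) -> R} (g : R) {x : VN N}.
Hypothesis Hq : qf r x = 0.

Let c := GG g * PI / 4.

Lemma Bf_axis : Bf r g x = Zc x ^ 2.
Proof. by rewrite /Bf Hq; ring. Qed.

Lemma Kf_axis_pos : 0 < Zc x -> Kf r g x = Zc x * exp c.
Proof.
move=> HZ; rewrite /Kf Bf_axis sqrt_pow2; last lra.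
rewrite /Jf /Phif Hq; case: Rlt_dec => [|_] /=; first lra.
case: Rlt_dec => [_|] /=; last lra.
by rewrite /c; congr (_ * exp _); field.
Qed.

Lemma Kf_axis_neg : Zc x < 0 -> Kf r g x = - Zc x * exp (- c).
Proof.
move=> HZ; rewrite /Kf Bf_axis (_ : Zc x ^ 2 = (- Zc x) ^ 2); last ring.
rewrite sqrt_pow2; last lra.
rewrite /Jf /Phif Hq; case: Rlt_dec => [|_] /=; first lra.
case: Rlt_dec => [|_] /=; first lra.
case: Rlt_dec => [_|] /=; last lra.
by rewrite /c; congr (_ * exp _); field.
Qed.

Lemma Kf_axis_eq1 : Kf r g x = 1 <-> Zc x = exp (- c) \/ Zc x = - exp c.
Proof.
have := exp_pos c; have := exp_pos (- c) => Hm Hp.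
case: (Rtotal_order (Zc x) 0) => [HZ | [HZ | HZ]].
- rewrite Kf_axis_neg // mul_exp_eq1 Ropp_involutive; lra.
- rewrite /Kf Bf_axis HZ /= Rmult_0_l sqrt_0 Rmult_0_l; lra.
- rewrite Kf_axis_pos // mul_exp_eq1; lra.
Qed.

End OnTheAxis.

Theorem theorem2p8 (N : nat) (r : 'I_(N - 1) -> 'I_(N - 1) -> R) (g : R) :
  (2 <= N)%nat -> symmetric_mx r -> posdef_mx r -> -2 < g < 2 ->
  let Z2 := exp (- (GG g * PI / 4)) in
  let Z1 := - exp (GG g * PI / 4) in
  (* the indicatrix meets the Z-axis {q = 0} exactly in the two points Z2, Z1 *)
  (forall x : VN N, Kf r g x = 1 /\ qf r x = 0 <->
     x = zaxis_pt N Z2 \/ x = zaxis_pt N Z1) /\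
  0 < Z2 /\ Z1 < 0 /\
  Z2 - Z1 = 2 * cosh (GG g * PI / 4).
Proof.
move=> HN _ Hr _ Z2 Z1.
have HN0 : (0 < N)%N by exact: ltnW.
split; last first.
  have := exp_pos (GG g * PI / 4); rewrite /Z1 /Z2 /cosh.
  by split; [exact: exp_pos | lra].
move=> x; split.
- move=> [HK Hq]; move/(Kf_axis_eq1 g Hq): HK => HZ.
  by rewrite (qf_eq0_zaxis Hr Hq); case: HZ => ->; [left | right].
- have Hax z : Kf r g (zaxis_pt N z) = 1 <-> z = Z2 \/ z = Z1.
    by rewrite (Kf_axis_eq1 g (qf_zaxis r z)) (Zc_zaxis z HN0).
  by case=> ->; (split; last exact: qf_zaxis); apply/Hax; [left | right].
Qed.
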